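(* Let $\mathcal{L}=(n,\mathcal{M},\mathcal{C})$ be a simple linearization and let $\mathcal{T}\subseteq\mathcal{P}$. Suppose $D(\mathcal{L})$ has a subgraph $Z$ with $|U(Z)|>1$ satisfying: (a) its underlying undirected graph is a cycle; (b) $V(Z)\subseteq\mathrm{succ}(\mathcal{T})$; (c) for all $s\in\mathcal{S}$, $t\in\mathcal{T}$ there is at most one directed $t$-$s$-path in $D(\mathcal{L})$; (d) $|\mathrm{pred}(s)\cap L(Z)|\le1$ for all $s\in\mathcal{S}$; (e) $|\mathrm{succ}(t)\cap U(Z)|\le1$ for all $t\in\mathcal{T}$. Then $\mathrm{proj}_{\mathcal{S}\cup\mathcal{T}}(P(\mathcal{L}))$ is not integral.
   Context: $[n]=\{1,\dots,n\}$; a monomial is a nonempty subset of $[n]$; $\mathcal{S}=\{\{i\}:i\in[n]\}$. A linearization is a triple $\mathcal{L}=(n,\mathcal{M},\mathcal{C})$, where $\mathcal{M}$ is a set of monomials with $\mathcal{S}\subseteq\mathcal{M}$ and $\mathcal{C}$ is a set of AND-constraints; each AND-constraint is a set $c\subseteq\mathcal{M}$ whose union $\bigcup c$ (resultant) lies in $\mathcal{M}$. $\mathcal{P}=\mathcal{M}\setminus\mathcal{S}$. Linearizations are consistent: each $m\in\mathcal{P}$ is the resultant of some $c$ with $|m'|<|m|$ for all $m'\in c$. $\mathcal{L}$ is simple if each proper monomial is the resultant of exactly one AND-constraint and $|\mathcal{C}|=|\mathcal{P}|$. $P(\mathcal{L})\subseteq\mathbb{R}^{\mathcal{M}}$ is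 the set of $y$ with $0\le y_m\le1$ ($m\in\mathcal{M}$), $y_{\bigcup c}\le y_m$ ($c\in\mathcal{C}$, $m\in c$), $\sum_{m\in c}y_m\le y_{\bigcup c}+|c|-1$ ($c\in\mathcal{C}$). $D(\mathcal{L})$ has node set $\mathcal{M}$ and, for each $c\in\mathcal{C}$, arcs from $\bigcup c$ to each $m\in c$. Cycles are simple; $V(Z)$ is the node set of $Z$. $\mathrm{succ}(W)$ (resp. $\mathrm{pred}(W)$) is the set of nodes reachable from (resp. which can reach) $W$ by directed paths, including $W$; $\mathrm{succ}(w)=\mathrm{succ}(\{w\})$, $\mathrm{pred}(w)=\mathrm{pred}(\{w\})$. $U(Z)$ (resp. $L(Z)$) is the set of nodes with out-degree (resp. in-degree) at least $2$ in $Z$. $\mathrm{proj}_{\mathcal{M}'}$ is orthogonal projection onto coordinates in $\mathcal{M}'$. *)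

From HB Require Import structures.
From mathcomp Require Import all_boot all_order all_algebra.
From mathcomp Require Import reals.
Set Implicit Arguments. Unset Strict Implicit. Unset Printing Implicit Defensive.
Import Order.TTheory GRing.Theory Num.Theory.
Local Open Scope ring_scope.

(* Subsets of [n] = {1..n} are represented as subsets of 'I_n = {0..n-1}.
   A monomial is a nonempty element of {set 'I_n}. *)

Definition resultant (n : nat) (c : {set {set 'I_n}}) : {set 'I_n} :=
  \bigcup_(m in c) m.

Definition Sing (n : nat) : {set {set 'I_n}} := [set [set i] | i : 'I_n].

Definition Prop_mono (n : nat) (M : {set {set 'I_n}}) : {set {set 'I_n}} :=
  M :\: Sing n.

Definition linearization (n : nat) (M : {set {set 'I_n}})
    (C : {set {set {set 'I_n}}}) : Prop :=
  [/\ set0 \notin M, Sing n \subset M &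
      forall c, c \in C -> c \subset M /\ resultant c \in M].

Definition consistent (n : nat) (M : {set {set 'I_n}})
    (C : {set {set {set 'I_n}}}) : Prop :=
  forall m, m \in Prop_mono M ->
    exists2 c, c \in C &
      resultant c = m /\ (forall m', m' \in c -> (#|m'| < #|m|)%N).

Definition simple_lin (n : nat) (M : {set {set 'I_n}})
    (C : {set {set {set 'I_n}}}) : Prop :=
  (forall m, m \in Prop_mono M -> #|[set c in C | resultant c == m]| = 1%N) /\
  #|C| = #|Prop_mono M|.

(* P(L), embedded in R^{all subsets} with coordinates outside M fixed to 0 *)
Definition PL (R : realType) (n : nat) (M : {set {set 'I_n}})
    (C : {set {set {set 'I_n}}}) (y : {set 'I_n} -> R) : Prop :=
  [/\ forall m, m \notin M -> y m = 0,
      forall m, m \in M -> 0 <= y m <= 1,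
      forall c m, c \in C -> m \in c -> y (resultant c) <= y m &
      forall c, c \in C ->
        \sum_(m in c) y m <= y (resultant c) + (#|c|%:R - 1)].

(* orthogonal projection onto the coordinates in K (a vector of R^K is
   represented by a function vanishing outside K) *)
Definition proj (R : realType) (n : nat) (K : {set {set 'I_n}})
    (Q : ({set 'I_n} -> R) -> Prop) (x : {set 'I_n} -> R) : Prop :=
  (forall m, m \notin K -> x m = 0) /\
  exists2 y, Q y & forall m, m \in K -> x m = y m.

Definition conv (R : realType) (n : nat) (A : ({set 'I_n} -> R) -> Prop)
    (x : {set 'I_n} -> R) : Prop :=
  exists k (p : 'I_k -> {set 'I_n} -> R) (l : 'I_k -> R),
    [/\ forall i, A (p i), forall i, 0 <= l i, \sum_i l i = 1 &
        forall m, x m = \sum_i l i * p i m].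

Definition integral_polytope (R : realType) (n : nat)
    (Q : ({set 'I_n} -> R) -> Prop) : Prop :=
  forall x, Q x <-> conv (fun z => Q z /\ forall m, z m \is a Num.int) x.

Definition arcD (n : nat) (C : {set {set {set 'I_n}}}) : rel {set 'I_n} :=
  fun u v => [exists c in C, (u == resultant c) && (v \in c)].

Definition succL (n : nat) (C : {set {set {set 'I_n}}}) (W : {set {set 'I_n}})
  : {set {set 'I_n}} := [set v | [exists w in W, connect (arcD C) w v]].
Definition predL (n : nat) (C : {set {set {set 'I_n}}}) (W : {set {set 'I_n}})
  : {set {set 'I_n}} := [set v | [exists w in W, connect (arcD C) v w]].

(* Z = (VZ, AZ) is a subgraph of D(L) whose underlying undirected graph is a
   cycle: the nodes can be cyclically ordered as a duplicate-free sequence s of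
   length >= 3 such that {u,v} is an edge iff u,v are cyclically adjacent. *)
Definition subgraph_cycle (n : nat) (M : {set {set 'I_n}})
    (C : {set {set {set 'I_n}}}) (VZ : {set {set 'I_n}})
    (AZ : {set {set 'I_n} * {set 'I_n}}) : Prop :=
  [/\ VZ \subset M,
      forall u v, (u, v) \in AZ -> arcD C u v &
      exists s : seq {set 'I_n},
        [/\ uniq s, (3 <= size s)%N, VZ =i s &
            forall u v, ((u, v) \in AZ) || ((v, u) \in AZ) =
              [&& u \in s, v \in s & (next s u == v) || (next s v == u)]]].

Definition UZ (n : nat) (VZ : {set {set 'I_n}})
    (AZ : {set {set 'I_n} * {set 'I_n}}) : {set {set 'I_n}} :=
  [set u in VZ | (2 <= #|[set v | (u, v) \in AZ]|)%N].
Definition LZ (n : nat) (VZ : {set {set 'I_n}})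
    (AZ : {set {set 'I_n} * {set 'I_n}}) : {set {set 'I_n}} :=
  [set v in VZ | (2 <= #|[set u | (u, v) \in AZ]|)%N].

Definition at_most_one_path (n : nat) (C : {set {set {set 'I_n}}})
    (t s : {set 'I_n}) : Prop :=
  forall p q : seq {set 'I_n},
    path (arcD C) t p -> uniq (t :: p) -> last t p = s ->
    path (arcD C) t q -> uniq (t :: q) -> last t q = s -> p = q.

From Pilot Require Import Defs.
From HB Require Import structures.
From mathcomp Require Import all_boot all_order all_algebra.
From mathcomp Require Import reals.
From mathcomp Require Import lra zify.
Import Order.TTheory GRing.Theory Num.Theory.
Set Implicit Arguments. Unset Strict Implicit. Unset Printing Implicit Defensive.

(* Pick a node [ustar] of U(Z) and let I be the union of the other nodes of
   U(Z).  Every arc of D(L) goes from a monomial to a subset of it, so on the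
   walk once around the cycle from [ustar] the nodes between two consecutive
   tops (nodes of U(Z)) descend to a bottom contained in both: consecutive tops
   intersect, and both out-neighbours of [ustar] in Z meet I.
   The point y = 1 - d, where d is 1 on the monomials above [ustar], 1/2 on the
   other monomials meeting I and 0 elsewhere, lies in P(L); at [ustar] this uses
   that its only AND-constraint contains both out-neighbours.  In a convex
   decomposition of the projection of y into integral points, each point z is
   tight wherever y is.  By (b) and (e) each top u other than [ustar] lies below
   some t in T that is not above [ustar], and then z_t = z_{j} for all j in u;
   so z is constant on the singletons of I.  A t in T above [ustar] has z_t = 0,
   so some singleton below t, necessarily in I, has z = 0.  Hence z vanishes on
   I, whereas y is 1/2 there. *)

Lemma connect_neq_step (T : finType) (e : rel T) x y :
  connect e x y -> x != y -> exists2 z, e x z & connect e z y.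
Proof.
case/connectP=> [[|z q]] /=; first by move=> _ ->; rewrite eqxx.
by case/andP=> hxz hq hy _; exists z => //; apply/connectP; exists q.
Qed.

Section Linearization.

Variables (n : nat) (M : {set {set 'I_n}}) (C : {set {set {set 'I_n}}}).
Hypothesis lin : linearization M C.

Lemma arcD_sub u v : arcD C u v -> v \subset u.
Proof. by case/existsP=> c /and3P[_ /eqP -> hv]; exact: bigcup_sup. Qed.

Lemma arcD_resultant c m : c \in C -> m \in c -> arcD C (Defs.resultant c) m.
Proof. by move=> hc hm; apply/existsP; exists c; rewrite hc eqxx hm. Qed.

Lemma connect_arcD_sub u v : connect (arcD C) u v -> v \subset u.
Proof.
case/connectP=> q; elim: q u => [|w q IH] u /=; first by move=> _ ->.
by case/andP=> huw /IH hq /hq hvw; exact: subset_trans hvw (arcD_sub huw).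
Qed.

Lemma arcD_mem u v : arcD C u v -> (u \in M) && (v \in M).
Proof.
have [_ _ hCM] := lin; case/existsP=> c /and3P[hc /eqP -> hv].
by have [hcM ->] := hCM c hc; rewrite (subsetP hcM v hv).
Qed.

Lemma mono_neq0 v : v \in M -> v != set0.
Proof. by have [h0 _ _] := lin; apply: contraTneq => ->. Qed.

Lemma consistent_ind (Q : {set 'I_n} -> Prop) : consistent M C ->
  (forall j, Q [set j]) ->
  (forall c, c \in C -> (forall m, m \in c -> Q m) -> Q (Defs.resultant c)) ->
  forall t, t \in M -> Q t.
Proof.
move=> hCons hS hC t; have [k hk] := ubnP #|t|; elim: k t hk => // k IH t hk htM.
have [/imsetP[j _ -> //] | htS] := boolP (t \in Sing n).
have [c hc [ht hsm]] := hCons t ltac:(by rewrite inE htS htM).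
have [_ _ hCM] := lin; rewrite -ht; apply: hC => // m hm.
by apply: IH; [have := hsm m hm; lia | exact: subsetP (hCM c hc).1 m hm].
Qed.

Lemma simple_arcD_mem c u w : simple_lin M C -> u \in Prop_mono M ->
  c \in C -> Defs.resultant c = u -> arcD C u w -> w \in c.
Proof.
case=> hS _ hu hc hcu /existsP[c' /and3P[hc' /eqP hc'u hw]].
have [c0 hc0] := cards1P (introT eqP (hS u hu)).
have : c \in [set c in C | Defs.resultant c == u] by rewrite inE hc hcu eqxx.
have : c' \in [set c in C | Defs.resultant c == u] by rewrite inE hc' -hc'u eqxx.
by rewrite hc0 => /set1P <- /set1P ->.
Qed.

End Linearization.

Lemma succLP n (C : {set {set {set 'I_n}}}) (W : {set {set 'I_n}}) v :
  reflect (exists2 w, w \in W & connect (arcD C) w v) (v \in succL C W).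
Proof. by rewrite inE; apply: exists_inP. Qed.

Lemma succL1_connectN n (C : {set {set {set 'I_n}}}) (W : {set {set 'I_n}}) t u v :
  (#|succL C [set t] :&: W| <= 1)%N -> u \in W -> v \in W -> u != v ->
  connect (arcD C) t u -> ~~ connect (arcD C) t v.
Proof.
move=> hW uW vW uv tu; apply/negP => tv.
have : [set u; v] \subset succL C [set t] :&: W.
  apply/subsetP => x; rewrite in_set2 => /orP[] /eqP ->;
    by rewrite in_setI ?uW ?vW andbT; apply/succLP; exists t; rewrite ?set11.
by move/subset_leq_card; rewrite cards2 uv => /leq_trans /(_ hW).
Qed.

Section Valley.

Variables (X : finType) (f : nat -> {set X}) (D U : nat -> bool) (m : nat).
Hypothesis edge_dir : forall j, j < m -> D j || U j.
Hypothesis down_sub : forall j, D j -> f j.+1 \subset f j.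
Hypothesis up_sub : forall j, U j -> f j \subset f j.+1.
Hypothesis f_neq0 : forall j, j <= m -> f j != set0.

Definition peak e := [&& 0 < e < m, U e.-1 & D e].

Lemma valley_bottom a b : b <= m -> a <= b -> (forall e, a < e < b -> ~~ peak e) ->
  exists2 c, a <= c <= b & forall j, a <= j <= b -> f c \subset f j.
Proof.
move=> hbm hab hno.
(* If the bottom [c] is not the last node, the last edge ascends, so a
   descending edge can only leave from the bottom itself. *)
suff [c hc [hsub _]] : exists2 c, a <= c <= b &
    (forall j, a <= j <= b -> f c \subset f j) /\ (c < b -> U b.-1) by exists c.
elim: b hbm hab hno => [|b IH] hbm hab hno.
  exists a; first lia; split=> [j hj|]; last lia.
  by have -> : j = a by lia.
have [-> | hab'] := eqVneq a b.+1.
  exists b.+1; first lia; split=> [j hj|]; last by rewrite ltnn.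
  by have -> : j = b.+1 by lia.
have [c hc [hsub hinv]] :=
  IH (ltnW hbm) ltac:(lia) ltac:(move=> e he; apply: hno; lia).
case/orP: (edge_dir hbm) => [hD | hU].
  have hcb : c = b.
    case: (ltnP c b) => [hcb|]; last lia.
    have /negP[] := hno b ltac:(lia).
    by rewrite /peak hD hinv // andbT; lia.
  exists b.+1; first lia; split=> [j hj|]; last by rewrite ltnn.
  have [-> // | hjb] := eqVneq j b.+1.
  by apply: subset_trans (down_sub hD) _; rewrite -hcb; apply: hsub; lia.
exists c; first lia; split=> [j hj|_] //.
have [-> | hjb] := eqVneq j b.+1; last by apply: hsub; lia.
by apply: subset_trans (up_sub hU); apply: hsub; lia.
Qed.

Lemma valley_meet a b : b <= m -> a <= b -> (forall e, a < e < b -> ~~ peak e) ->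
  f a :&: f b != set0.
Proof.
move=> hbm hab hno; have [c hc hsub] := valley_bottom hbm hab hno.
case/set0Pn: (f_neq0 (j:=c) ltac:(lia)) => x hx.
by apply/set0Pn; exists x; rewrite inE !(subsetP (hsub _ _) x hx) //; lia.
Qed.

Lemma peaks_linked (P : pred X) :
  (forall e, peak e -> {in f e &, forall x y, P x = P y}) ->
  forall a b, peak a -> peak b -> {in f a & f b, forall x y, P x = P y}.
Proof.
move=> hP a b; wlog hab : a b / a <= b.
  move=> hw pa pb x y hx hy; case: (leqP a b) => hab.
    exact: (hw a b hab pa pb x y hx hy).
  by rewrite (hw b a (ltnW hab) pb pa y x hy hx).
have [k hk] := ubnP (b - a); elim: k a hk hab => // k IH a hk hab pa pb x y hx hy.
have [eab | hab'] := eqVneq a b.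
  by rewrite eab in hx; exact: (hP b pb x y hx hy).
have [e /andP[pe hae] emin] := ex_minnP (ex_intro (fun e => peak e && (a < e)) b
  ltac:(by rewrite /= pb; lia)).
have heb : e <= b by apply: emin; rewrite pb; lia.
have /set0Pn[z] : f a :&: f e != set0.
  apply: valley_meet; [by case/andP: pe; lia | lia | move=> e' he'].
  by apply/negP => pe'; have := emin e' ltac:(by rewrite pe'; lia); lia.
rewrite inE => /andP[hza hze].
by rewrite (hP a pa x z hx hza); apply: (IH e) => //; lia.
Qed.

Lemma node_meets_peak j : j <= m -> (exists e, peak e) ->
  exists2 e, peak e & f j :&: f e != set0.
Proof.
move=> hjm [e0 pe0]; have peak_le e : peak e -> e <= m by case/andP; lia.
case: (leqP j e0) => hj.
  have [e /andP[pe hje] emin] := ex_minnP (ex_intro (fun e => peak e && (j <= e)) e0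
    ltac:(by rewrite /= pe0 hj)).
  exists e => //; apply: valley_meet => [|//|e' he']; first exact: peak_le.
  by apply/negP => pe'; have := emin e' ltac:(by rewrite pe'; lia); lia.
have [e /andP[pe hej] emax] := ex_maxnP (ex_intro (fun e => peak e && (e <= j)) e0
  ltac:(by rewrite /= pe0 ltnW)) (m := j) ltac:(by move=> e /= /andP[]).
exists e => //; rewrite setIC; apply: valley_meet => // e' he'.
by apply/negP => pe'; have := emax e' ltac:(by rewrite pe'; lia); lia.
Qed.

End Valley.

Definition linked (X : finType) (F : {set {set X}}) : Prop :=
  forall P : pred X,
    {in F, forall u : {set X}, {in u &, forall x y, P x = P y}} ->
    {in \bigcup_(u in F) u &, forall x y, P x = P y}.

Section CycleTops.

Variables (n : nat) (VZ : {set {set 'I_n}}) (AZ : {set {set 'I_n} * {set 'I_n}}).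
Variables (ustar : {set 'I_n}) (p : seq {set 'I_n}).
Local Notation s := (ustar :: p).
Hypothesis arc_sub : forall u v, (u, v) \in AZ -> v \subset u.
Hypothesis s_neq0 : set0 \notin s.
Hypothesis s_uniq : uniq s.
Hypothesis s_size : 3 <= size s.
Hypothesis VZ_s : VZ =i s.
Hypothesis adjacent : forall u v, ((u, v) \in AZ) || ((v, u) \in AZ) =
  [&& u \in s, v \in s & (next s u == v) || (next s v == u)].

(* [f j] is the j-th node of the cycle from [ustar], and [f m = ustar] again;
   [D j] ([U j]) says that the j-th edge of Z points forward (backward).  The
   nodes of U(Z) other than [ustar] are exactly the peaks of this walk. *)
Local Notation m := (size s).
Let f j := nth ustar s j.
Let D j := (f j, f j.+1) \in AZ.
Let U j := (f j.+1, f j) \in AZ.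
Local Notation top := (peak D U m).
Local Notation F := (UZ VZ AZ :\ ustar).

Let f_mem j : j <= m -> f j \in s.
Proof.
rewrite leq_eqVlt => /orP[/eqP-> | hj]; last exact: mem_nth.
by rewrite /f nth_default ?mem_head.
Qed.

Let f_inj j k : j < m -> k < m -> f j = f k -> j = k.
Proof. by move=> hj hk /eqP; rewrite nth_uniq // => /eqP. Qed.

Let f_next j : j < m -> next s (f j) = f j.+1.
Proof. by move=> hj; rewrite /f next_nth (mem_nth _ hj) index_uniq. Qed.

Let f_prev j : j < m -> prev s (f j.+1) = f j.
Proof. by move=> hj; rewrite -f_next // (prev_next s_uniq). Qed.

Let arc_next_prev u v : (u, v) \in AZ -> v = next s u \/ v = prev s u.
Proof.
move=> huv; have := adjacent u v; rewrite huv orTb => /esym/and3P[_ _].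
by case/orP=> /eqP <-; [left | right; rewrite (prev_next s_uniq)].
Qed.

Let edge_dir j : j < m -> D j || U j.
Proof.
move=> hj; rewrite /D /U adjacent f_mem 1?ltnW // f_mem // f_next //.
by rewrite eqxx.
Qed.

Let f_neq0 j : j <= m -> f j != set0.
Proof. by move=> hj; apply: contraNneq s_neq0 => <-; exact: f_mem. Qed.

Let down_sub j : D j -> f j.+1 \subset f j. Proof. exact: arc_sub. Qed.
Let up_sub j : U j -> f j \subset f j.+1. Proof. exact: arc_sub. Qed.

Let top_in_F e : top e -> f e \in F.
Proof.
case/and3P=> /andP[he0 hem] hU hD.
rewrite !inE VZ_s f_mem ?(ltnW hem) //=.
apply/andP; split.
  by apply/eqP => /(f_inj (k := 0) hem); lia.
have hne : f e.+1 != f e.-1.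
  apply/eqP => heq; case: (ltnP e.+1 m) => he1.
    by have := f_inj he1 (_ : e.-1 < m) heq; lia.
  have hm : e.+1 = m by lia.
  rewrite hm /f nth_default // in heq.
  by have := f_inj (j := 0) (k := e.-1) ltac:(lia) ltac:(lia) heq; lia.
apply: leq_trans (_ : 2 <= #|[set f e.+1; f e.-1]|) _; first by rewrite cards2 hne.
apply: subset_leq_card.
apply/subsetP => v; rewrite !inE => /orP[] /eqP -> //.
by move: hU; rewrite /U prednK.
Qed.

Let F_top u : u \in F -> exists2 e, top e & u = f e.
Proof.
case/setD1P=> hne; rewrite inE VZ_s => /andP[hus hcard].
have hem : index u s < m by rewrite index_mem.
have hfe : f (index u s) = u by rewrite /f nth_index.
move: (index u s) hem hfe => e hem hfe.
have he0 : 0 < e by case: e hfe {hem} => // hu; rewrite -hu eqxx in hne.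
have hout : [set v | (u, v) \in AZ] = [set f e.+1; f e.-1].
  have card2 : #|[set f e.+1; f e.-1]| <= 2 by rewrite cards2; case: (_ != _).
  apply/eqP; rewrite eqEcard (leq_trans card2 hcard) andbT.
  apply/subsetP => v; rewrite !inE => /arc_next_prev[] ->.
    by rewrite -hfe f_next ?eqxx.
  by rewrite -hfe -(prednK he0) f_prev ?eqxx ?orbT //; lia.
exists e => //; rewrite /peak he0 hem /D /U prednK // hfe.
have := set22 (f e.+1) (f e.-1); have := set21 (f e.+1) (f e.-1).
by rewrite -hout !inE => -> ->.
Qed.

Lemma tops_linked : linked F.
Proof.
move=> P hP x y /bigcupP[u hu hx] /bigcupP[v hv hy].
have [a ta hua] := F_top hu; have [b tb hvb] := F_top hv.
rewrite hua in hx; rewrite hvb in hy.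
apply: (peaks_linked edge_dir down_sub up_sub f_neq0 _ ta tb hx hy) => e te.
exact: hP (top_in_F te).
Qed.

Lemma out_meets_tops u w : u \in F -> (ustar, w) \in AZ ->
  w :&: \bigcup_(v in F) v != set0.
Proof.
move=> hu huw; have [e0 te0 _] := F_top hu.
have [j hj ->] : exists2 j, j <= m & w = f j.
  case: (arc_next_prev huw) => ->; first by exists 1; rewrite // -f_next.
  exists m.-1; first exact: leq_pred.
  by rewrite -f_prev // /f nth_default.
have [e te /set0Pn[x]] :=
  node_meets_peak edge_dir down_sub up_sub f_neq0 hj (ex_intro _ e0 te0).
rewrite inE => /andP[hxj hxe]; apply/set0Pn; exists x.
by rewrite inE hxj; apply/bigcupP; exists (f e) => //; exact: top_in_F.
Qed.

End CycleTops.

Lemma subgraph_cycle_tops n (M : {set {set 'I_n}}) C VZ AZ ustar :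
  linearization M C -> subgraph_cycle M C VZ AZ -> ustar \in UZ VZ AZ ->
  linked (UZ VZ AZ :\ ustar) /\
  forall u w, u \in UZ VZ AZ :\ ustar -> (ustar, w) \in AZ ->
    w :&: \bigcup_(v in UZ VZ AZ :\ ustar) v != set0.
Proof.
move=> lin [VM AZ_arc [s [s_uniq s_size VZ_s adj]]].
rewrite inE VZ_s => /andP[us_s _]; have [i p rot_s] := rot_to us_s.
have arc_sub u v : (u, v) \in AZ -> v \subset u by move/AZ_arc/arcD_sub.
have p_uniq : uniq (ustar :: p) by rewrite -rot_s rot_uniq.
have p_neq0 : set0 \notin ustar :: p.
  rewrite -rot_s mem_rot -VZ_s; apply/negP => /(subsetP VM) /(mono_neq0 lin).
  by rewrite eqxx.
have p_size : (3 <= size (ustar :: p))%N by rewrite -rot_s size_rot.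
have VZ_p : VZ =i ustar :: p by move=> v; rewrite -rot_s mem_rot VZ_s.
have adj_p u v : ((u, v) \in AZ) || ((v, u) \in AZ) =
    [&& u \in ustar :: p, v \in ustar :: p &
        (next (ustar :: p) u == v) || (next (ustar :: p) v == u)].
  by rewrite -rot_s !mem_rot !(next_rot i s_uniq) adj.
split; first exact: tops_linked arc_sub p_neq0 p_uniq p_size VZ_p adj_p.
move=> u w; exact: (out_meets_tops arc_sub p_neq0 p_uniq p_size VZ_p adj_p).
Qed.

Local Open Scope ring_scope.

Lemma int_ge0_lt1 (R : archiNumDomainType) (v : R) :
  v \is a Num.int -> 0 <= v -> v < 1 -> v = 0.
Proof.
move=> vint v0; move: vint; rewrite intrEge0 // => /natrP[k ->].
by rewrite -[1]/(1%:R) ltr_nat ltnS leqn0 => /eqP ->.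
Qed.

Lemma weighted_sum_eq_le (R : realDomainType) k (l a b : 'I_k -> R) :
  (forall i, 0 <= l i) -> (forall i, a i <= b i) ->
  \sum_i l i * a i = \sum_i l i * b i -> forall i, l i != 0 -> a i = b i.
Proof.
move=> hl hab hs i hli.
have hge j : true -> 0 <= l j * (b j - a j) by rewrite mulr_ge0 ?subr_ge0.
have h0 : \sum_j l j * (b j - a j) = 0.
  by under eq_bigr do rewrite mulrBr; rewrite sumrB hs subrr.
have /eqP := psumr_eq0P hge h0 (i := i) isT.
by rewrite mulf_eq0 (negbTE hli) subr_eq0 => /eqP.
Qed.

Section PolytopeP.

Variables (R : realType) (n : nat) (M : {set {set 'I_n}}) (C : {set {set {set 'I_n}}}).
Hypotheses (lin : linearization M C) (lin_cons : consistent M C).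

Lemma PL_le_sing (y : {set 'I_n} -> R) t j :
  PL M C y -> t \in M -> j \in t -> y t <= y [set j].
Proof.
case=> _ _ hle _ htM; move: t htM j.
pose Q (t : {set 'I_n}) := forall j, j \in t -> y t <= y [set j].
apply: (consistent_ind (Q := Q) lin lin_cons) => //.
  by move=> i j /set1P ->.
move=> c hc IH j /bigcupP[m hm hjm].
exact: le_trans (hle c m hc hm) (IH m hm j hjm).
Qed.

Lemma PL_sing1 (y : {set 'I_n} -> R) t : PL M C y -> t \in M ->
  (forall j, j \in t -> y [set j] = 1) -> y t = 1.
Proof.
case=> _ h01 _ hsum htM; move: t htM.
pose Q (t : {set 'I_n}) := (forall j, j \in t -> y [set j] = 1) -> y t = 1.
apply: (consistent_ind (Q := Q) lin lin_cons) => //.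
  by move=> i; apply; rewrite set11.
move=> c hc IH hj; have [_ _ /(_ c hc)[_ hrM]] := lin.
have hc1 : \sum_(m in c) y m = #|c|%:R.
  rewrite (eq_bigr (fun=> 1)) ?sumr_const // => m hm; apply: IH => // j hjm.
  by apply: hj; apply/bigcupP; exists m.
have := hsum c hc; have /andP[_ hr1] := h01 _ hrM; rewrite hc1 => hle.
by apply/eqP; rewrite eq_le hr1 /=; lra.
Qed.

Section Projection.

Variable K : {set {set 'I_n}}.
Hypotheses (SK : Sing n \subset K) (KM : K \subset M).

Let sing_K j : [set j] \in K.
Proof. by apply: (subsetP SK); apply: imset_f. Qed.

Lemma proj_PL_bounds (z : {set 'I_n} -> R) v :
  proj K (PL M C) z -> v \in K -> 0 <= z v <= 1.
Proof. by case=> _ [y [_ h01 _ _] hzy] hv; rewrite hzy // h01 // (subsetP KM). Qed.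

Lemma proj_PL_le_sing (z : {set 'I_n} -> R) t j :
  proj K (PL M C) z -> t \in K -> j \in t -> z t <= z [set j].
Proof.
case=> _ [y hy hzy] ht hj; rewrite !hzy ?sing_K //.
exact: PL_le_sing hy (subsetP KM t ht) hj.
Qed.

Lemma proj_PL_sing1 (z : {set 'I_n} -> R) t : proj K (PL M C) z -> t \in K ->
  (forall j, j \in t -> z [set j] = 1) -> z t = 1.
Proof.
case=> _ [y hy hzy] ht hj; rewrite hzy //; apply: PL_sing1 hy (subsetP KM t ht) _.
by move=> j hjt; rewrite -hzy ?sing_K ?hj.
Qed.

Lemma conv_support_tight k (q : 'I_k -> {set 'I_n} -> R) (l : 'I_k -> R) x :
  (forall i, proj K (PL M C) (q i)) -> (forall i, 0 <= l i) -> \sum_i l i = 1 ->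
  (forall v, x v = \sum_i l i * q i v) -> forall i, l i != 0 ->
  [/\ forall v, v \in K -> x v = 1 -> q i v = 1,
      forall v, v \in K -> x v = 0 -> q i v = 0 &
      forall t j, t \in K -> j \in t -> x t = x [set j] -> q i t = q i [set j]].
Proof.
move=> hq hl hl1 hx i hli; split.
- move=> v hv hxv.
  apply: (weighted_sum_eq_le (a := q^~ v) (b := fun=> 1) hl _ _ hli) => [i'|].
    by case/andP: (proj_PL_bounds (hq i') hv).
  by rewrite -hx hxv; under eq_bigr do rewrite mulr1.
- move=> v hv hxv.
  apply/esym/(weighted_sum_eq_le (a := fun=> 0) (b := q^~ v) hl _ _ hli) => [i'|].
    by case/andP: (proj_PL_bounds (hq i') hv).
  by rewrite -hx hxv big1 // => i' _; rewrite mulr0.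
- move=> t j ht hj hxt.
  apply: (weighted_sum_eq_le (a := q^~ t) (b := q^~ [set j]) hl _ _ hli) => [i'|].
    exact: proj_PL_le_sing (hq i') ht hj.
  by rewrite -!hx.
Qed.

End Projection.

End PolytopeP.

Section FractionalPoint.

Variables (R : realType) (n : nat) (M : {set {set 'I_n}}) (C : {set {set {set 'I_n}}}).
Hypotheses (lin : linearization M C) (lin_cons : consistent M C).
Hypothesis lin_simple : simple_lin M C.
Variables (ustar w1 w2 : {set 'I_n}) (F : {set {set 'I_n}}).
Hypotheses (arc_w1 : arcD C ustar w1) (arc_w2 : arcD C ustar w2) (w12 : w1 != w2).
Local Notation I := (\bigcup_(u in F) u).
Hypotheses (w1I : w1 :&: I != set0) (w2I : w2 :&: I != set0).
Local Notation above v := (connect (arcD C) v ustar).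

Definition deficit v : R := if above v then 1 else if v :&: I != set0 then 2^-1 else 0.

Definition frac_point v : R := if v \in M then 1 - deficit v else 0.

Lemma above_not_sing v : above v -> v \notin Sing n.
Proof.
move=> hv; apply/imsetP => -[j _ hvj].
have sub_j w : arcD C ustar w -> w = [set j].
  move=> hw; have /andP[_ wM] := arcD_mem lin hw.
  have := subset_trans (arcD_sub hw) (connect_arcD_sub hv).
  by rewrite hvj subset1 (negbTE (mono_neq0 lin wM)) orbF => /eqP.
by move/eqP: w12; rewrite (sub_j w1) // (sub_j w2).
Qed.

Lemma deficit_ge0 v : 0 <= deficit v.
Proof. by rewrite /deficit; case: ifP => _; [|case: ifP => _]; lra. Qed.

Lemma deficit_le1 v : deficit v <= 1.
Proof. by rewrite /deficit; case: ifP => _; [|case: ifP => _]; lra. Qed.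

Lemma deficit_half v : v :&: I != set0 -> 2^-1 <= deficit v.
Proof. by move=> vI; rewrite /deficit vI; case: ifP => _; lra. Qed.

Lemma deficit_arcD u v : arcD C u v -> deficit v <= deficit u.
Proof.
move=> huv; rewrite {1}/deficit; case: ifP => [hv|_].
  by rewrite /deficit (connect_trans (connect1 huv) hv).
case: ifP => [/set0Pn[x] | _]; last exact: deficit_ge0.
rewrite inE => /andP[xv xI]; apply: deficit_half; apply/set0Pn; exists x.
by rewrite inE (subsetP (arcD_sub huv) x xv).
Qed.

Lemma deficit_resultant c : c \in C ->
  deficit (Defs.resultant c) <= \sum_(m in c) deficit m.
Proof.
move=> hc; have [_ _ /(_ c hc)[cM rM]] := lin.
have le_sum m : m \in c -> deficit m <= \sum_(m in c) deficit m.
  by move=> hm; rewrite (bigD1 m) //= lerDl sumr_ge0 // => i _; exact: deficit_ge0.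
rewrite {1}/deficit; case: ifP => [hr | _].
  have rP : Defs.resultant c \in Prop_mono M by rewrite inE above_not_sing.
  have [r_us | r_us] := eqVneq (Defs.resultant c) ustar.
    rewrite r_us in rP.
    have w1c := simple_arcD_mem lin_simple rP hc r_us arc_w1.
    have w2c := simple_arcD_mem lin_simple rP hc r_us arc_w2.
    rewrite (bigD1 w1) //= (bigD1 w2) /=; last by rewrite w2c eq_sym w12.
    have : 0 <= \sum_(i | (i \in c) && (i != w1) && (i != w2)) deficit i.
      by apply: sumr_ge0 => i _; exact: deficit_ge0.
    by have := deficit_half w1I; have := deficit_half w2I; lra.
  have [r' hr' r'us] := connect_neq_step hr r_us.
  have := le_sum r' (simple_arcD_mem lin_simple rP hc erefl hr').
  by rewrite /deficit r'us.
case: ifP => [/set0Pn[x] | _]; last by rewrite sumr_ge0 // => i _; exact: deficit_ge0.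
rewrite inE => /andP[/bigcupP[m hm xm] xI]; apply: le_trans (le_sum m hm).
by apply: deficit_half; apply/set0Pn; exists x; rewrite inE xm.
Qed.

Lemma frac_point_PL : PL M C frac_point.
Proof.
have [_ _ hCM] := lin; split.
- by move=> v /negbTE vM; rewrite /frac_point vM.
- move=> v vM; rewrite /frac_point vM.
  by have := deficit_ge0 v; have := deficit_le1 v; lra.
- move=> c m hc hm; have [cM rM] := hCM c hc.
  rewrite /frac_point rM (subsetP cM m hm) lerD2l lerN2.
  exact/deficit_arcD/arcD_resultant.
- move=> c hc; have [cM rM] := hCM c hc.
  rewrite /frac_point rM (eq_bigr (fun m => 1 - deficit m)); last first.
    by move=> m hm; rewrite (subsetP cM m hm).
  by rewrite sumrB sumr_const; have := deficit_resultant hc; lra.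
Qed.

Lemma frac_point_sing j : frac_point [set j] = if j \in I then 2^-1 else 1.
Proof.
have [_ SM _] := lin; have jS : [set j] \in Sing n by apply: imset_f.
have not_above : ~~ above [set j] by apply: contraTN jS => /above_not_sing.
have jI : ([set j] :&: I != set0) = (j \in I).
  apply/set0Pn/idP => [[x] | jI]; first by rewrite !inE => /andP[/eqP ->].
  by exists j; rewrite !inE eqxx.
rewrite /frac_point (subsetP SM _ jS) /deficit (negbTE not_above) jI.
by case: ifP => _; lra.
Qed.

Lemma frac_point_above v : above v -> v \in M -> frac_point v = 0.
Proof. by move=> hv vM; rewrite /frac_point /deficit vM hv subrr. Qed.

Lemma frac_point_half v : ~~ above v -> v \in M -> v :&: I != set0 ->
  frac_point v = 2^-1.
Proof. by move=> hv vM vI; rewrite /frac_point /deficit vM (negbTE hv) vI; lra. Qed.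

Variable T : {set {set 'I_n}}.
Hypotheses (TP : T \subset Prop_mono M) (FM : F \subset M).
Hypothesis T_above : exists2 t, t \in T & above t.
Hypothesis F_below : forall u, u \in F ->
  exists2 t, t \in T & connect (arcD C) t u && ~~ above t.
Hypothesis F_linked : linked F.
Local Notation K := (Sing n :|: T).

Let TM : T \subset M.
Proof. by apply/subsetP => t /(subsetP TP); rewrite inE => /andP[]. Qed.

Let SK : Sing n \subset K. Proof. exact: subsetUl. Qed.

Let KM : K \subset M.
Proof. by have [_ SM _] := lin; rewrite subUset SM TM. Qed.

Lemma tight_point_vanishes (z : {set 'I_n} -> R) :
  proj K (PL M C) z -> (forall v, z v \is a Num.int) ->
  (forall v, v \in K -> frac_point v = 1 -> z v = 1) ->
  (forall v, v \in K -> frac_point v = 0 -> z v = 0) ->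
  (forall t j, t \in T -> j \in t -> frac_point t = frac_point [set j] ->
     z t = z [set j]) ->
  forall j, j \in I -> z [set j] = 0.
Proof.
move=> hz zint tight1 tight0 tight_half.
have sing_K j : [set j] \in K by apply: (subsetP SK); apply: imset_f.
have out1 j : j \notin I -> z [set j] = 1.
  by move=> jI; apply: tight1; rewrite ?frac_point_sing ?(negbTE jI).
have F_const : {in F, forall u : {set 'I_n},
    {in u &, forall x y, (z [set x] == 0) = (z [set y] == 0)}}.
  move=> u hu; have [t ht /andP[htu t_above]] := F_below hu.
  have uI : u \subset I by apply: bigcup_sup.
  have tI : t :&: I != set0.
    have /set0Pn[x xu] := mono_neq0 lin (subsetP FM u hu).
    apply/set0Pn; exists x.
    by rewrite inE (subsetP (connect_arcD_sub htu)) ?(subsetP uI).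
  have eq_t j : j \in u -> z t = z [set j].
    move=> hj; apply: tight_half => //; first exact: (subsetP (connect_arcD_sub htu)).
    by rewrite frac_point_sing (subsetP uI j hj) frac_point_half // (subsetP TM).
  by move=> x y hx hy; rewrite -!eq_t.
have [t ht t_above] := T_above.
have tK : t \in K by rewrite inE ht orbT.
have zt0 : z t = 0 by apply: tight0; rewrite // frac_point_above // (subsetP TM).
have [j jt zj] : exists2 j, j \in t & z [set j] != 1.
  have [/exists_inP // | /exists_inPn all1] := boolP [exists j in t, z [set j] != 1].
  have := proj_PL_sing1 lin lin_cons SK KM hz tK (fun j hj => eqP (negPn (all1 j hj))).
  by rewrite zt0 => /eqP; rewrite eq_sym oner_eq0.
have jI : j \in I by apply/negPn/negP => /out1 zj1; rewrite zj1 eqxx in zj.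
have zj0 : z [set j] = 0.
  have /andP[zj_ge0 zj_le1] := proj_PL_bounds KM hz (sing_K j).
  by apply: int_ge0_lt1; rewrite // lt_neqAle zj.
move=> i iI; have /= := F_linked F_const iI jI.
by rewrite zj0 eqxx => /eqP.
Qed.

Lemma frac_point_proj_not_integral : ~ integral_polytope (proj K (@PL R n M C)).
Proof.
move=> hint; pose x v := if v \in K then frac_point v else 0.
have xK v : v \in K -> x v = frac_point v by rewrite /x => ->.
have hx : proj K (PL M C) x.
  split=> [v /negbTE vK | ]; first by rewrite /x vK.
  by exists frac_point; [exact: frac_point_PL | move=> v /xK].
have [k [q [l [hq hl hl1 hxq]]]] := (hint x).1 hx.
have /set0Pn[i0] := w1I; rewrite inE => /andP[_ i0I].
have q0 i : l i != 0 -> q i [set i0] = 0.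
  move=> hli; have [tight1 tight0 tight_sing] :=
    conv_support_tight lin lin_cons SK KM (fun i => (hq i).1) hl hl1 hxq hli.
  apply: (tight_point_vanishes (hq i).1 (hq i).2) i0I.
  - by move=> v hv; rewrite -xK //; exact: tight1.
  - by move=> v hv; rewrite -xK //; exact: tight0.
  - move=> t j ht hj; rewrite -!xK ?inE ?ht ?orbT ?imset_f //; apply: tight_sing => //.
    by rewrite inE ht orbT.
have := hxq [set i0].
rewrite xK ?inE ?imset_f // frac_point_sing i0I big1 => [/eqP|i _].
  by rewrite invr_eq0 pnatr_eq0.
by have [->|/q0 ->] := eqVneq (l i) 0; rewrite ?mul0r ?mulr0.
Qed.

End FractionalPoint.

Theorem lemma3p14 (R : realType) (n : nat) (M : {set {set 'I_n}})
    (C : {set {set {set 'I_n}}}) (T : {set {set 'I_n}})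
    (VZ : {set {set 'I_n}}) (AZ : {set {set 'I_n} * {set 'I_n}}) :
  linearization M C -> consistent M C -> simple_lin M C ->
  T \subset Prop_mono M ->
  subgraph_cycle M C VZ AZ ->
  (1 < #|UZ VZ AZ|)%N ->
  VZ \subset succL C T ->
  (forall s t, s \in Sing n -> t \in T -> at_most_one_path C t s) ->
  (forall s, s \in Sing n -> (#|predL C [set s] :&: LZ VZ AZ| <= 1)%N) ->
  (forall t, t \in T -> (#|succL C [set t] :&: UZ VZ AZ| <= 1)%N) ->
  ~ integral_polytope (proj (Sing n :|: T) (@PL R n M C)).
Proof.
move=> lin lin_cons lin_simple TP cycZ UZ2 VT _ _ UT.
have [VM AZ_arc _] := cycZ.
have UZ_VZ u : u \in UZ VZ AZ -> u \in VZ by rewrite inE => /andP[].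
have [ustar [u2 [us_U u2_U us_u2]]] := card_gt1P UZ2.
have [F_linked F_meets] := subgraph_cycle_tops lin cycZ us_U.
have u2F : u2 \in UZ VZ AZ :\ ustar by rewrite in_setD1 eq_sym us_u2 u2_U.
have : (1 < #|[set v | (ustar, v) \in AZ]|)%N by move: us_U; rewrite inE => /andP[].
case/card_gt1P => w1 [w2 []]; rewrite !inE => arc_w1 arc_w2 w12.
apply: (frac_point_proj_not_integral lin lin_cons lin_simple
  (AZ_arc _ _ arc_w1) (AZ_arc _ _ arc_w2) w12 (F_meets _ _ u2F arc_w1)
  (F_meets _ _ u2F arc_w2) TP _ _ _ F_linked).
- by apply/subsetP => u /setD1P[_ /UZ_VZ /(subsetP VM)].
- exact/succLP/(subsetP VT)/UZ_VZ.
- move=> u /setD1P[u_us uU]; have /succLP[t tT tu] := subsetP VT u (UZ_VZ u uU).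
  by exists t; rewrite // tu (succL1_connectN (UT t tT) uU us_U).
Qed.
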